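(* Let $q$ be a prime power. There exists a $2$-code of $\mathcal S_{3,q}$ of size $(q^2-1)(q^2+q+1)+1$.
   Context: $\mathcal S_{3,q}$ is the set of $3\times 3$ symmetric matrices over ${\rm GF}(q)$, with rank distance $d_r(A,B)={\rm rk}(A-B)$. A $2$-code is a non-empty subset whose minimum distance $\min\{{\rm rk}(c_1-c_2): c_1\neq c_2\}$ equals $2$. *)

From mathcomp Require Import all_boot all_order all_algebra all_field.
Set Implicit Arguments. Unset Strict Implicit. Unset Printing Implicit Defensive.
Import GRing.Theory.
Local Open Scope ring_scope.

Definition symmetric_mx (F : fieldType) (n : nat) (A : 'M[F]_n) : bool :=
  A^T == A.

Definition rank_dist (F : fieldType) (n : nat) (A B : 'M[F]_n) : nat :=
  \rank (A - B).

Definition is_d_code (F : finFieldType) (n d : nat) (C : {set 'M[F]_n}) : Prop :=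
  [/\ C != set0,
      (forall A, A \in C -> symmetric_mx A),
      (forall A B, A \in C -> B \in C -> A != B -> (d <= rank_dist A B)%N) &
      exists A B, [/\ A \in C, B \in C, A != B & rank_dist A B = d]].

From mathcomp Require Import all_boot all_order all_algebra all_field.
From mathcomp Require Import ring.
Set Implicit Arguments. Unset Strict Implicit. Unset Printing Implicit Defensive.
Import GRing.Theory.
Local Open Scope ring_scope.

(* Pick alpha such that X^2 - X - alpha has no root in F.  Then the symmetric
   matrices [[t, s], [s, s + alpha t]] form a 2-dimensional space all of whose
   nonzero members are invertible.  Transporting this space onto the plane
   n^perp, for each of the q^2 + q + 1 points <n> of the projective plane,
   yields q^2 - 1 symmetric rank-2 matrices with kernel <n>; these, with 0,
   form the code.  Two codewords with the same kernel differ by a member of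
   the same space, hence have rank-2 difference.  If A u = 0 and B v = 0 with
   <u> <> <v> and A - B = c r had rank <= 1, then v^T (A - B) u = 0 forces
   r u = 0 or v^T c = 0, that is B u = 0 or A v = 0, which is impossible. *)

Definition mx_of_seqs (R : nzRingType) m n (rows : seq (seq R)) : 'M[R]_(m, n) :=
  \matrix_(i < m, j < n) nth 0 (nth [::] rows i) j.

Lemma det_mx22 (R : comNzRingType) (M : 'M[R]_2) :
  \det M = M 0 0 * M 1 1 - M 0 1 * M 1 0.
Proof.
rewrite (expand_det_row _ 0) !big_ord_recl big_ord0 /cofactor !det_mx11 !mxE /=.
rewrite expr0 expr1 mul1r mulN1r addr0 mulrN.
by congr (_ * _ - _ * _); congr (M _ _); apply: val_inj.
Qed.

Lemma mxrank_le1_factor (F : fieldType) m n (D : 'M[F]_(m, n)) :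
  (\rank D <= 1)%N -> exists (C : 'cV_m) (R : 'rV_n), D = C *m R.
Proof.
case: (ltngtP (\rank D) 1) => // [|rkD _].
  by rewrite ltnS leqn0 mxrank_eq0 => /eqP ->; exists 0, 0; rewrite mul0mx.
by move: (col_base D) (row_base D) (mulmx_base D); rewrite rkD => C R <-; exists C, R.
Qed.

Lemma mulmx11_eq0 (F : fieldType) (X Y : 'M[F]_1) :
  X *m Y = 0 -> X = 0 \/ Y = 0.
Proof.
move/matrixP/(_ 0 0); rewrite !mxE big_ord1 => /eqP; rewrite mulf_eq0.
by case/orP => /eqP X00; [left | right]; apply/matrixP => i j; rewrite !ord1 mxE.
Qed.

Lemma sym_mxrank_le1_kernel (F : fieldType) n (A B : 'M[F]_n) (u v : 'cV_n) :
  A^T = A -> B^T = B -> A *m u = 0 -> B *m v = 0 -> (\rank (A - B)%R <= 1)%N ->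
  A *m v = 0 \/ B *m u = 0.
Proof.
move=> symA symB Au0 Bv0 /mxrank_le1_factor[C [R defD]].
have vB0 : v^T *m B = 0 by rewrite -symB -trmx_mul Bv0 trmx0.
have : v^T *m C *m (R *m u) = 0.
  by rewrite mulmxA -(mulmxA _ C) -defD mulmxBr mulmxBl -mulmxA Au0 vB0 mulmx0 mul0mx subr0.
case/mulmx11_eq0 => [vC0 | Ru0]; [left | right].
  have Dv0 : (A - B) *m v = 0.
    have symD : (A - B)^T = A - B by rewrite linearB /= symA symB.
    by rewrite -symD defD trmx_mul -mulmxA -[v in C^T *m v]trmxK -trmx_mul vC0 trmx0 mulmx0.
  by move: Dv0; rewrite mulmxBl Bv0 subr0.
have : (A - B) *m u = 0 by rewrite defD -mulmxA Ru0 mulmx0.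
by rewrite mulmxBl Au0 sub0r => /eqP; rewrite oppr_eq0 => /eqP.
Qed.

Section Congruence.
Variables (F : fieldType) (n k : nat) (P : 'M[F]_(n, k)) (L : 'M[F]_(k, n)).
Hypothesis LP : L *m P = 1%:M.

Lemma congr_left_invK (M : 'M_k) : L *m (P *m M *m P^T) *m L^T = M.
Proof. by rewrite !mulmxA LP mul1mx -mulmxA -trmx_mul LP trmx1 mulmx1. Qed.

Lemma mxrank_congr_left_inv (M : 'M_k) : \rank (P *m M *m P^T) = \rank M.
Proof.
apply/eqP; rewrite eqn_leq (leq_trans (mxrankM_maxl _ _)) ?mxrankM_maxr //=.
by rewrite -{1}(congr_left_invK M) (leq_trans (mxrankM_maxl _ _)) ?mxrankM_maxr.
Qed.

Lemma congr_left_inv_inj : injective (fun M : 'M_k => P *m M *m P^T).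
Proof. by move=> M N /= eqMN; rewrite -(congr_left_invK M) eqMN congr_left_invK. Qed.

Lemma congr_unit_kernel (M : 'M_k) (x : 'cV_n) :
  M \in unitmx -> P *m M *m P^T *m x = 0 -> P^T *m x = 0.
Proof.
move=> Mu /(congr1 (mulmx (invmx M *m L))).
by rewrite mulmx0 !mulmxA -(mulmxA _ L) LP mulmx1 mulVmx // mul1mx.
Qed.

End Congruence.

Lemma not_injective_not_onto (T : finType) (f : T -> T) x y :
  x != y -> f x = f y -> exists z, z \notin codom f.
Proof.
move=> neq_xy fxy; case: (pickP [predC codom f]) => [z codom'z | onto]; first by exists z.
have /image_injP inj_f : #|codom f| == #|T|.
  rewrite eqn_leq leq_image_card; apply/subset_leq_card/subsetP => z _.
  by move/negbFE: (onto z).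
by move: neq_xy; rewrite (inj_f x y) ?eqxx.
Qed.

Lemma exists_sqr_sub_nonvalue (F : finFieldType) :
  exists alpha : F, forall x, x ^+ 2 - x != alpha.
Proof.
have [alpha alpha_out] : exists alpha : F, alpha \notin codom (fun x => x ^+ 2 - x).
  apply: (@not_injective_not_onto _ _ 0 1); first by rewrite eq_sym oner_eq0.
  by rewrite expr0n expr1n !subrr.
by exists alpha => x; apply: contraNneq alpha_out => <-; apply: codom_f.
Qed.

(* Normalized homogeneous coordinates (1 : a : b), (0 : 1 : a), (0 : 0 : 1). *)
Notation point F := (F * F + (F + unit))%type.

Section ProjectivePlane.
Variable F : fieldType.

Definition point_vec (i : point F) : 'cV[F]_3 :=
  match i with
  | inl (a, b) => mx_of_seqs 3 1 [:: [:: 1]; [:: a]; [:: b]]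
  | inr (inl a) => mx_of_seqs 3 1 [:: [:: 0]; [:: 1]; [:: a]]
  | inr (inr _) => mx_of_seqs 3 1 [:: [:: 0]; [:: 0]; [:: 1]]
  end.

Definition perp_mx (i : point F) : 'M[F]_(3, 2) :=
  match i with
  | inl (a, b) => mx_of_seqs 3 2 [:: [:: -a; -b]; [:: 1; 0]; [:: 0; 1]]
  | inr (inl a) => mx_of_seqs 3 2 [:: [:: 1; 0]; [:: 0; -a]; [:: 0; 1]]
  | inr (inr _) => mx_of_seqs 3 2 [:: [:: 1; 0]; [:: 0; 1]; [:: 0; 0]]
  end.

Definition perp_linv (i : point F) : 'M[F]_(2, 3) :=
  match i with
  | inl _ => mx_of_seqs 2 3 [:: [:: 0; 1; 0]; [:: 0; 0; 1]]
  | inr (inl _) => mx_of_seqs 2 3 [:: [:: 1; 0; 0]; [:: 0; 0; 1]]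
  | inr (inr _) => mx_of_seqs 2 3 [:: [:: 1; 0; 0]; [:: 0; 1; 0]]
  end.

Lemma perp_linvK (i : point F) : perp_linv i *m perp_mx i = 1%:M.
Proof.
apply/matrixP => -[[|[|k]] Hk] -[[|[|l]] Hl] //; case: i => [[a b]|[a|[]]];
by rewrite !mxE !big_ord_recl big_ord0 !mxE /=; ring.
Qed.

Lemma perp_mx_vec (i : point F) : (perp_mx i)^T *m point_vec i = 0.
Proof.
apply/matrixP => -[[|[|k]] Hk] -[[|l] Hl] //; case: i => [[a b]|[a|[]]];
by rewrite !mxE !big_ord_recl big_ord0 !mxE /=; ring.
Qed.

Lemma perp_mx_vec_eq0 (i j : point F) : (perp_mx j)^T *m point_vec i = 0 -> i = j.
Proof.
move/matrixP => perp_ij; move: (perp_ij 0 0) (perp_ij 1 0) => {perp_ij}.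
case: i => [[a b]|[a|[]]]; case: j => [[a' b']|[a'|[]]];
rewrite !mxE !big_ord_recl !big_ord0 !mxE /= ?mulr0 ?mul0r ?mulr1 ?mul1r ?addr0 ?add0r;
move=> /eqP + /eqP; rewrite ?oner_eq0 ?eqxx // ?(addrC (- _)) ?subr_eq0;
by [move=> /eqP-> /eqP-> | move=> _ /eqP-> | ].
Qed.

End ProjectivePlane.

Lemma card_point (F : finFieldType) : #|{: point F}| = (#|F| ^ 2 + #|F| + 1)%N.
Proof. by rewrite card_sum card_prod card_sum card_unit mulnn addnA. Qed.

Section AnisotropicForm.
Variables (F : fieldType) (alpha : F).

Definition aniso_mx (st : F * F) : 'M[F]_2 :=
  mx_of_seqs 2 2 [:: [:: st.2; st.1]; [:: st.1; st.1 + alpha * st.2]].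

Lemma aniso_mx_sym st : (aniso_mx st)^T = aniso_mx st.
Proof. by apply/matrixP => -[[|[|k]] Hk] -[[|[|l]] Hl] //; rewrite !mxE. Qed.

Lemma aniso_mxB st st' : aniso_mx st - aniso_mx st' = aniso_mx (st - st').
Proof. by apply/matrixP => -[[|[|k]] Hk] -[[|[|l]] Hl] //; rewrite !mxE /=; ring. Qed.

Lemma aniso_mx_inj : injective aniso_mx.
Proof.
move=> [s t] [s' t'] /matrixP eq_st.
by move: (eq_st 0 0) (eq_st 0 1); rewrite !mxE /= => -> ->.
Qed.

Hypothesis alpha_aniso : forall x : F, x ^+ 2 - x != alpha.

Lemma aniso_mx_unit st : st != 0 -> aniso_mx st \in unitmx.
Proof.
case: st => s t nz_st; rewrite unitmxE unitfE det_mx22 !mxE /=.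
have [t0 | nz_t] := eqVneq t 0.
  have nz_s : s != 0 by apply: contraNneq nz_st => s0; rewrite s0 t0.
  by rewrite t0 mul0r sub0r oppr_eq0 mulf_neq0.
have -> : t * (s + alpha * t) - s * s = t ^+ 2 * (alpha - ((s / t) ^+ 2 - s / t)).
  by field.
by rewrite mulf_neq0 ?expf_neq0 // subr_eq0 eq_sym alpha_aniso.
Qed.

End AnisotropicForm.

Section Code.
Variables (F : finFieldType) (alpha : F).
Hypothesis alpha_aniso : forall x : F, x ^+ 2 - x != alpha.

Definition codeword (i : point F) (st : F * F) : 'M[F]_3 :=
  perp_mx i *m aniso_mx alpha st *m (perp_mx i)^T.

Definition code : {set 'M[F]_3} :=
  0 |: [set codeword p.1 p.2 | p in setX [set: point F] [set~ (0 : F * F)]].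

Lemma codeP A :
  reflect (A = 0 \/ exists i st, st != 0 /\ A = codeword i st) (A \in code).
Proof.
apply: (iffP setU1P) => [[-> | /imsetP[[i st]]] | [-> | [i [st [nz_st ->]]]]].
- by left.
- by rewrite !inE => nz_st ->; right; exists i, st.
- by left.
by right; apply/imsetP; exists (i, st); rewrite // !inE.
Qed.

Lemma codeword_sym i st : (codeword i st)^T = codeword i st.
Proof. by rewrite /codeword !trmx_mul trmxK aniso_mx_sym mulmxA. Qed.

Lemma codeword_vec i st : codeword i st *m point_vec i = 0.
Proof. by rewrite /codeword -!mulmxA perp_mx_vec !mulmx0. Qed.

Lemma mxrank_codeword i st : st != 0 -> \rank (codeword i st) = 2.
Proof.
by move=> nz_st; rewrite (mxrank_congr_left_inv (perp_linvK i)) mxrank_unit ?aniso_mx_unit.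
Qed.

Lemma codewordB i st st' : codeword i st - codeword i st' = codeword i (st - st').
Proof. by rewrite /codeword -mulmxBl -mulmxBr aniso_mxB. Qed.

Lemma codeword_kernel i j st : st != 0 -> codeword j st *m point_vec i = 0 -> i = j.
Proof.
move=> nz_st /(congr_unit_kernel (perp_linvK j) (aniso_mx_unit alpha_aniso nz_st)).
exact: perp_mx_vec_eq0.
Qed.

Lemma codeword_inj i j st st' :
  st' != 0 -> codeword i st = codeword j st' -> i = j /\ st = st'.
Proof.
move=> nz_st' eq_E; have eq_ij : i = j.
  by apply: (codeword_kernel nz_st'); rewrite -eq_E codeword_vec.
split=> //; move: eq_E; rewrite eq_ij => /(congr_left_inv_inj (perp_linvK j)).
exact: aniso_mx_inj.
Qed.

Lemma code_dist A B : A \in code -> B \in code -> A != B -> (2 <= \rank (A - B)%R)%N.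
Proof.
move=> /codeP[-> | [i [st [nz_st ->]]]] /codeP[-> | [j [st' [nz_st' ->]]]] neq_AB.
- by rewrite eqxx in neq_AB.
- by rewrite sub0r mxrank_opp mxrank_codeword.
- by rewrite subr0 mxrank_codeword.
have [eq_ij | neq_ij] := eqVneq i j.
  move: neq_AB; rewrite -eq_ij codewordB => neq_AB.
  by rewrite mxrank_codeword // subr_eq0; apply: contraNneq neq_AB => ->.
rewrite leqNgt ltnS; apply/negP.
move/(sym_mxrank_le1_kernel (codeword_sym i st) (codeword_sym j st')).
move/(_ _ _ (codeword_vec i st) (codeword_vec j st')).
by case=> [/(codeword_kernel nz_st) | /(codeword_kernel nz_st')] eq_ij;
  rewrite eq_ij eqxx in neq_ij.
Qed.

Lemma code_is_2_code : is_d_code 2 code.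
Proof.
have nz_e : ((0 : F), (1 : F)) != 0 by apply/eqP => -[/eqP]; rewrite oner_eq0.
pose E := codeword (inr (inr tt)) (0, 1).
have rkE : \rank E = 2 by rewrite mxrank_codeword.
split.
- by apply/set0Pn; exists 0; apply/codeP; left.
- by move=> A /codeP[-> | [i [st [_ ->]]]]; rewrite /symmetric_mx ?trmx0 ?codeword_sym.
- exact: code_dist.
exists E, 0; split; rewrite /rank_dist ?subr0 //.
- by apply/codeP; right; exists (inr (inr tt)), (0, 1).
- by apply/codeP; left.
by apply/eqP => E0; move: rkE; rewrite E0 mxrank0.
Qed.

Lemma card_code : #|code| = (1 + #|{: point F}| * (#|F| ^ 2 - 1))%N.
Proof.
rewrite cardsU1 card_in_imset => [|[i st] [j st']]; last first.
  by rewrite !inE => /= nz_st nz_st' /codeword_inj[// | -> ->].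
rewrite cardsX cardsT cardsC1 card_prod mulnn subn1.
case: imsetP => [[[i st]] | //]; rewrite !inE /= => nz_st.
by move/(congr1 mxrank); rewrite mxrank0 mxrank_codeword.
Qed.

End Code.

Theorem mainTheorem8 (F : finFieldType) :
  let q := #|F| in
  exists C : {set 'M[F]_3},
    is_d_code 2 C /\ #|C| = ((q ^ 2 - 1) * (q ^ 2 + q + 1) + 1)%N.
Proof.
move=> q; have [alpha alpha_aniso] := exists_sqr_sub_nonvalue F.
exists (code alpha); split; first exact: code_is_2_code.
by rewrite card_code // card_point addnC mulnC.
Qed.
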